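(* Let the setting described in the context hold, and assume conditions (A)(i)–(iii) and (P), with $L_F^2\eta_k<1-\eta_F$ for every $k\ge1$. Let $k\ge1$ be such that the iterate satisfies $x_k^\delta\in\mathcal{B}_\rho(x^\dagger)$, and write $e_k^\delta=x_k^\delta-x^\dagger$. Define \[ c_k^\delta=2\eta_k\lambda_k^\delta\max(1,L_G^2)\big(\tfrac32+2\eta_k\lambda_k^\delta L_G^2\big), \qquad d_k=\frac{(1+\eta_F)^2}{2(1-L_F^2\eta_k-\eta_F)}\eta_k . \] Then \[ \|e_{k+1}^\delta\|^2\le(1+nc_k^\delta)\|e_k^\delta\|^2+nc_k^\delta(C_{max}+\delta)^2+nd_k\delta^2, \] and \begin{align*} \mathbb{E}[\|e_{k+1}^\delta\|^2]\le{}&(1+c_k^\delta)\mathbb{E}[\|e_k^\delta\|^2]+c_k^\delta(C_{max}+\delta)^2+2(1+\eta_F)\eta_k\delta\,\mathbb{E}[\|F(x_k^\delta)-y^\delta\|^2]^{1/2}\\ &-2(1-L_F^2\eta_k-\eta_F)\eta_k\,\mathbb{E}[\|F(x_k^\delta)-y^\delta\|^2]\\ \le{}&(1+c_k^\delta)\mathbb{E}[\|e_k^\delta\|^2]+c_k^\delta(C_{max}+\delta)^2+d_k\delta^2 . \end{align*}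
   Context: Setting. $X,Y$ are real Hilbert spaces and $n\ge1$. $Y^n$ is the product Hilbert space with $\|(z_i)\|^2=\sum_i\|z_i\|^2$. For $i=1,\dots,n$, $F_i:\mathcal{D}(F_i)\subset X\to Y$ and $G_i:X\to Y$ are nonlinear, $F(x)=n^{-1/2}(F_1(x),\dots,F_n(x))$ and $G(x)=n^{-1/2}(G_1(x),\dots,G_n(x))$. Data. $y^\dagger=n^{-1/2}(y_1^\dagger,\dots,y_n^\dagger)$ are the exact data and $y^\delta=n^{-1/2}(y_1^\delta,\dots,y_n^\delta)$ the noisy data, with $\|y^\delta-y^\dagger\|\le\delta$. Reference solution. $x_1$ is a deterministic initial guess, and $x^\dagger$ is the solution of $F(x)=y^\dagger$ of minimal distance to $x_1$. Algorithm. $x_1^\delta=x_1$, and \[ x_{k+1}^\delta=x_k^\delta-\eta_k\big(F_{i_k}'(x_k^\delta)^*(F_{i_k}(x_k^\delta)-y^\delta_{i_k})+\lambda_k^\delta G_{i_k}'(x_k^\delta)^*(G_{i_k}(x_k^\delta)-y^\delta_{i_k})\big), \] with $i_k$ drawn uniformly and independently from $\{1,\dots,n\}$, $\eta_k>0$ and $\lambda_k^\delta>0$. $\mathbb{E}$ is expectation over the random indices. (A) There is a closed ball $\mathcal{B}_\rho(x^\dagger)\subset\bigcap_i\mathcal{D}(F_i)$, $\rho\ge\|x_1-x^\dagger\|$ sufficiently large, on which the following hold. (i) $F_i$ and $G_i$ have continuous Fréchet derivatives with $\max_i\sup\|F_i'\|\le L_F$ and $\max_i\sup\|G_i'\|\le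 L_G$. (ii) There is $\eta_F\in[0,1)$ with $\|F_i(x)-F_i(\tilde x)-F_i'(\tilde x)(x-\tilde x)\|\le\eta_F\|F_i(x)-F_i(\tilde x)\|$ for all $i$ and $x,\tilde x\in\mathcal{B}_\rho(x^\dagger)$. (iii) $C_{min}\le\|G(x^* )-y^\dagger\|\le C_{max}$ for every solution $x^*\in\mathcal{B}_\rho(x^\dagger)$ of $F(x)=y^\dagger$, with constants $0<C_{min}\le C_{max}$. (P) $L_F^2\eta_k<1$, $\sum_k\eta_k=\infty$, and $\sum_k\eta_k\lambda_k^\delta<\infty$. *)

From HB Require Import structures.
From mathcomp Require Import all_boot all_order all_algebra.
From mathcomp Require Import all_classical all_reals all_analysis.
Set Implicit Arguments. Unset Strict Implicit. Unset Printing Implicit Defensive.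
Import Order.TTheory GRing.Theory Num.Theory.
Import numFieldNormedType.Exports.
Local Open Scope classical_set_scope.
Local Open Scope ring_scope.

(* A real inner product on a normed space whose induced norm is the norm.
   Together with completeness (completeNormedModType) this is a real
   Hilbert space. *)
Definition is_inner_product (R : realType) (V : normedModType R)
    (ip : V -> V -> R) : Prop :=
  (forall u v, ip u v = ip v u) /\
  (forall (a : R) u v w, ip (a *: u + v) w = a * ip u w + ip v w) /\
  (forall u, ip u u = `|u| ^+ 2).

Definition cball (R : realType) (V : normedModType R) (c : V) (r : R) : set V :=
  [set x | `|x - c| <= r].

Definition C1_on (R : realType) (V W : normedModType R) (f : V -> W)
    (A : set V) : Prop :=
  (forall x, A x -> differentiable f x) /\
  (forall x, A x -> forall e : R, 0 < e -> exists2 d : R, 0 < d &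
     forall y, A y -> `|y - x| < d ->
       forall h, `|'d f y h - 'd f x h| <= e * `|h|).

(* Norm in Y^n of the vector n^{-1/2}(z_1,...,z_n):
   ||n^{-1/2} z|| = sqrt( n^{-1} sum_i ||z_i||^2 ). *)
Definition pnorm (R : realType) (Y : normedModType R) (n : nat)
    (z : 'I_n -> Y) : R :=
  Num.sqrt (n%:R^-1 * \sum_(i < n) `|z i| ^+ 2).

(* One step of the algorithm at (paper) iteration k with index i:
   x - eta_k (F_i'(x)^*(F_i(x)-y_i) + lam_k G_i'(x)^*(G_i(x)-y_i)).
   Fs i x, Gs i x stand for the adjoints F_i'(x)^*, G_i'(x)^*. *)
Definition step (R : realType) (X Y : normedModType R) (n : nat)
    (F G : 'I_n -> X -> Y) (Fs Gs : 'I_n -> X -> Y -> X) (yd : 'I_n -> Y)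
    (eta lam : nat -> R) (k : nat) (i : 'I_n) (x : X) : X :=
  x - eta k *: (Fs i x (F i x - yd i) + lam k *: Gs i x (G i x - yd i)).

(* run k x s: start from x at (paper) iteration k and apply the steps with
   the successive indices in s.  Hence for t = (i_1,...,i_m),
   run 1 x_1 t = x_{m+1}. *)
Fixpoint run (R : realType) (X Y : normedModType R) (n : nat)
    (F G : 'I_n -> X -> Y) (Fs Gs : 'I_n -> X -> Y -> X) (yd : 'I_n -> Y)
    (eta lam : nat -> R) (k : nat) (x : X) (s : seq 'I_n) : X :=
  match s with
  | [::] => x
  | i :: s' => run F G Fs Gs yd eta lam k.+1 (step F G Fs Gs yd eta lam k i x) s'
  end.

(* Expectation over m indices drawn uniformly and independently from
   {1,...,n}: the uniform average over all m-tuples. *)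
Definition Eunif (R : realType) (n m : nat) (f : m.-tuple 'I_n -> R) : R :=
  (n%:R ^+ m)^-1 * \sum_(t : m.-tuple 'I_n) f t.

From HB Require Import structures.
From mathcomp Require Import all_boot all_order all_algebra.
From mathcomp Require Import all_classical all_reals all_analysis.
From mathcomp Require Import lra ring.
Set Implicit Arguments. Unset Strict Implicit. Unset Printing Implicit Defensive.
Import Order.TTheory GRing.Theory Num.Theory.
Import numFieldNormedType.Exports.
Local Open Scope classical_set_scope.
Local Open Scope ring_scope.

(* Write e_k = x_k - x^dagger, r = F_i(x_k) - y_i^delta and s = G_i(x_k) - y_i^delta,
   and expand |e_{k+1}|^2 = |e_k - eta_k (F_i'(x_k)^* r + lam_k G_i'(x_k)^* s)|^2.
   The tangential cone condition bounds <F_i'(x_k) e_k, r> from below by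
   (1 - eta_F) |r|^2 - (1 + eta_F) |y_i^delta - y_i^dagger| |r|, and the mean value
   theorem makes G_i L_G-Lipschitz on the ball, so all G-terms are absorbed into
   c_k (|e_k|^2 + (|G_i(x^dagger) - y_i^dagger| + |y_i^delta - y_i^dagger|)^2).
   Averaging over the last index, Cauchy-Schwarz in Y^n bounds the noise cross term
   by delta ||F(x_k) - y^delta||; averaging over the earlier indices, Jensen bounds
   E ||F(x_k) - y^delta|| by the square root of its second moment.  Completing the
   square in the residual gives the d_k delta^2 term.  The pathwise bound instead uses
   that a nonnegative summand is at most n times the average over the n indices. *)

Section InnerProduct.
Context (R : realType) (V : normedModType R) (ip : V -> V -> R).
Hypothesis ip_inner : is_inner_product ip.

Lemma ipC u v : ip u v = ip v u.
Proof. by case: ip_inner => + _; apply. Qed.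

Lemma ip_linear a u v w : ip (a *: u + v) w = a * ip u w + ip v w.
Proof. by case: ip_inner => _ [+ _]; apply. Qed.

Lemma ipnormE u : ip u u = `|u| ^+ 2.
Proof. by case: ip_inner => _ [_]; apply. Qed.

Lemma ipDl u v w : ip (u + v) w = ip u w + ip v w.
Proof. by have := ip_linear 1 u v w; rewrite scale1r mul1r. Qed.

Lemma ipZl a u w : ip (a *: u) w = a * ip u w.
Proof.
have ip0 : ip 0 w = 0 by have := ipDl 0 0 w; rewrite addr0; lra.
by rewrite -[a *: u]addr0 ip_linear ip0 addr0.
Qed.

Lemma ipNl u w : ip (- u) w = - ip u w.
Proof. by rewrite -scaleN1r ipZl mulN1r. Qed.

Lemma ipBl u v w : ip (u - v) w = ip u w - ip v w.
Proof. by rewrite ipDl ipNl. Qed.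

Lemma ipDr u v w : ip w (u + v) = ip w u + ip w v.
Proof. by rewrite ipC ipDl !(ipC w). Qed.

Lemma ipZr a u w : ip w (a *: u) = a * ip w u.
Proof. by rewrite ipC ipZl ipC. Qed.

Lemma ipNr u w : ip w (- u) = - ip w u.
Proof. by rewrite ipC ipNl ipC. Qed.

Lemma normD_sqr u v : `|u + v| ^+ 2 = `|u| ^+ 2 + 2 * ip u v + `|v| ^+ 2.
Proof. by rewrite -!ipnormE ipDl !ipDr (ipC v u); ring. Qed.

Lemma normB_sqr u v : `|u - v| ^+ 2 = `|u| ^+ 2 - 2 * ip u v + `|v| ^+ 2.
Proof. by rewrite normD_sqr ipNr normrN; ring. Qed.

Lemma ip_le_norm u v : ip u v <= `|u| * `|v|.
Proof.
have : `|u + v| ^+ 2 <= (`|u| + `|v|) ^+ 2.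
  by rewrite ler_sqr ?nnegrE ?addr_ge0 // ler_normD.
rewrite normD_sqr; lra.
Qed.

Lemma ip_ge_norm u v : - (`|u| * `|v|) <= ip u v.
Proof. by have := ip_le_norm u (- v); rewrite ipNr normrN; lra. Qed.

Lemma oppr_ip2_le u v : - (2 * ip u v) <= `|u| ^+ 2 + `|v| ^+ 2.
Proof. by have := sqr_ge0 `|u + v|; rewrite normD_sqr; lra. Qed.

Lemma normD_sqr_le (u v : V) : `|u + v| ^+ 2 <= 2 * `|u| ^+ 2 + 2 * `|v| ^+ 2.
Proof. by have := oppr_ip2_le u (- v); rewrite normD_sqr ipNr normrN; lra. Qed.

Lemma ip_continuousl w : continuous (ip^~ w).
Proof.
have ip_linearl : linear (ip^~ w) by move=> a u v; rewrite ip_linear.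
pose l : {linear V -> R} := HB.pack (ip^~ w) (GRing.isLinear.Build _ _ _ _ _ ip_linearl).
suff : continuous l by [].
apply/linear_bounded_continuous/bounded_funP => r; exists (r * `|w|) => y yr /=.
rewrite ler_norml; have := ip_ge_norm y w; have := ip_le_norm y w.
have := normr_ge0 w; nra.
Qed.

End InnerProduct.

Section FiniteAverage.
Context (R : realType) (T : finType).

Definition favg (f : T -> R) : R := #|T|%:R^-1 * \sum_t f t.

Lemma favg_le (f g : T -> R) : (forall t, f t <= g t) -> favg f <= favg g.
Proof. by move=> fg; rewrite ler_wpM2l ?invr_ge0 // ler_sum. Qed.

Lemma favgD (f g : T -> R) : favg (fun t => f t + g t) = favg f + favg g.
Proof. by rewrite /favg big_split mulrDr. Qed.

Lemma favgB (f g : T -> R) : favg (fun t => f t - g t) = favg f - favg g.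
Proof. by rewrite /favg sumrB mulrBr. Qed.

Lemma favgZ (c : R) (f : T -> R) : favg (fun t => c * f t) = c * favg f.
Proof. by rewrite /favg -mulr_sumr mulrCA. Qed.

Lemma favg_cst (c : R) : (0 < #|T|)%N -> favg (fun=> c) = c.
Proof.
by move=> T0; rewrite /favg sumr_const -[c *+ _]mulr_natl mulKf // pnatr_eq0 -lt0n.
Qed.

Lemma favg_ge0 (f : T -> R) : (forall t, 0 <= f t) -> 0 <= favg f.
Proof. by move=> f0; apply: mulr_ge0; [rewrite invr_ge0 | apply: sumr_ge0]. Qed.

Lemma le_card_favg (f : T -> R) (t : T) :
  (forall s, 0 <= f s) -> f t <= #|T|%:R * favg f.
Proof.
move=> f0; have T0 : #|T|%:R != 0 :> R.
  by rewrite pnatr_eq0 -lt0n; apply/card_gt0P; exists t.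
by rewrite /favg mulrA mulfV // mul1r (bigD1 t) //= lerDl sumr_ge0.
Qed.

Lemma sumr_mul_sqr_le (f g : T -> R) :
  (\sum_t f t * g t) ^+ 2 <= (\sum_t f t ^+ 2) * (\sum_t g t ^+ 2).
Proof.
have : 0 <= \sum_s \sum_t (f s * g t - f t * g s) ^+ 2.
  by do 2 (apply: sumr_ge0 => ? _); apply: sqr_ge0.
(* Lagrange's identity *)
have -> : \sum_s \sum_t (f s * g t - f t * g s) ^+ 2 =
    \sum_s \sum_t (f s ^+ 2 * g t ^+ 2) + \sum_s \sum_t (f t ^+ 2 * g s ^+ 2)
    - 2 * \sum_s \sum_t (f s * g s * (f t * g t)).
  rewrite mulr_sumr -big_split -sumrB /=; apply: eq_bigr => s _.
  rewrite mulr_sumr -big_split -sumrB /=; apply: eq_bigr => t _; ring.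
rewrite [X in _ + X - _]exchange_big /= -!big_distrlr /= expr2; lra.
Qed.

Lemma favg_mul_le (f g : T -> R) :
  favg (fun t => f t * g t) <=
  Num.sqrt (favg (fun t => f t ^+ 2)) * Num.sqrt (favg (fun t => g t ^+ 2)).
Proof.
rewrite -sqrtrM ?favg_ge0 // => [|t]; last exact: sqr_ge0.
apply: le_trans (ler_norm _) _; rewrite -sqrtr_sqr; apply: ler_wsqrtr.
rewrite /favg [X in X <= _]exprMn [X in _ <= X]mulrACA -expr2.
by apply: ler_wpM2l; [rewrite exprn_ge0 ?invr_ge0 | apply: sumr_mul_sqr_le].
Qed.

Lemma favg_le_sqrt (f : T -> R) :
  (0 < #|T|)%N -> favg f <= Num.sqrt (favg (fun t => f t ^+ 2)).
Proof.
move=> T0; have := favg_mul_le f (fun=> 1).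
by rewrite expr1n favg_cst // sqrtr1 mulr1; under eq_fun do rewrite mulr1.
Qed.

Lemma favg_sqrD_le (f g : T -> R) :
  favg (fun t => (f t + g t) ^+ 2) <=
  (Num.sqrt (favg (fun t => f t ^+ 2)) + Num.sqrt (favg (fun t => g t ^+ 2))) ^+ 2.
Proof.
have -> : favg (fun t => (f t + g t) ^+ 2) =
    favg (fun t => f t ^+ 2) + 2 * favg (fun t => f t * g t) + favg (fun t => g t ^+ 2).
  rewrite -favgZ -!favgD /favg; congr (_ * _); apply: eq_bigr => t _; ring.
have := favg_mul_le f g.
rewrite sqrrD !sqr_sqrtr ?favg_ge0 // => [|t|t]; [lra | exact: sqr_ge0 | exact: sqr_ge0].
Qed.

End FiniteAverage.

Lemma run_rcons (R : realType) (X Y : normedModType R) (n : nat)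
    (F G : 'I_n -> X -> Y) (Fs Gs : 'I_n -> X -> Y -> X) (yd : 'I_n -> Y)
    (eta lam : nat -> R) (s : seq 'I_n) (k : nat) (x : X) (i : 'I_n) :
  run F G Fs Gs yd eta lam k x (rcons s i) =
  step F G Fs Gs yd eta lam (k + size s) i (run F G Fs Gs yd eta lam k x s).
Proof.
elim: s k x => [|j s IH] k x /=; first by rewrite addn0.
by rewrite IH addSnnS.
Qed.

Lemma sum_tuple_rcons (R : realType) (T : finType) (m : nat) (g : seq T -> R) :
  \sum_(u : m.+1.-tuple T) g u = \sum_(t : m.-tuple T) \sum_(i : T) g (rcons t i).
Proof.
pose h (p : m.-tuple T * T) : m.+1.-tuple T := [tuple of rcons p.1 p.2].
pose h' (u : m.+1.-tuple T) : m.-tuple T * T :=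
  ([tuple of belast (thead u) (behead_tuple u)], last (thead u) (behead u)).
have theadE (u : m.+1.-tuple T) : thead u :: behead u = u :> seq T.
  by rewrite [in RHS](tuple_eta u).
have hK : cancel h h'.
  move=> [t i]; rewrite /h /h' /=.
  have := lastI (thead [tuple of rcons t i]) (behead [tuple of rcons t i]).
  rewrite theadE => /rcons_inj [tE iE].
  by congr (_, _) => //; apply: val_inj.
have h'K : cancel h' h by move=> u; apply: val_inj; rewrite /h /h' /= -lastI theadE.
rewrite (reindex h) /=; last by exists h' => // ? _.
by rewrite pair_big.
Qed.

Lemma favg_tuple_rcons (R : realType) (T : finType) (m : nat) (g : seq T -> R) :
  favg (fun u : m.+1.-tuple T => g u) =
  favg (fun t : m.-tuple T => favg (fun i : T => g (rcons t i))).
Proof.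
rewrite /favg sum_tuple_rcons -mulr_sumr !card_tuple !natrX exprS invfM.
by rewrite mulrA [X in X * _]mulrC.
Qed.

Lemma EunifE (R : realType) (n m : nat) (f : m.-tuple 'I_n -> R) : Eunif f = favg f.
Proof. by rewrite /Eunif /favg card_tuple card_ord natrX. Qed.

Lemma pnormE (R : realType) (Y : normedModType R) (n : nat) (z : 'I_n -> Y) :
  pnorm z = Num.sqrt (favg (fun i => `|z i| ^+ 2)).
Proof. by rewrite /pnorm /favg card_ord. Qed.

Lemma pnorm_ge0 (R : realType) (Y : normedModType R) (n : nat) (z : 'I_n -> Y) :
  0 <= pnorm z.
Proof. exact: sqrtr_ge0. Qed.

Lemma adjoint_norm_sqr_le (R : realType) (X Y : normedModType R)
    (ipX : X -> X -> R) (ipY : Y -> Y -> R) (A : X -> Y) (As : Y -> X) (L : R) :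
  is_inner_product ipX -> is_inner_product ipY ->
  (forall h, `|A h| <= L * `|h|) -> (forall h v, ipY (A h) v = ipX h (As v)) ->
  forall v, `|As v| ^+ 2 <= L ^+ 2 * `|v| ^+ 2.
Proof.
move=> ipX_inner ipY_inner A_bound adjA v.
have : `|As v| ^+ 2 <= L * `|As v| * `|v|.
  rewrite -(ipnormE ipX_inner) -adjA.
  apply: le_trans (ip_le_norm ipY_inner _ _) _.
  by rewrite ler_wpM2r.
have := normr_ge0 (As v); nra.
Qed.

Lemma cball_segment (R : realType) (V : normedModType R) (c x : V) (rho t : R) :
  cball c rho x -> 0 <= t <= 1 -> cball c rho (t *: (x - c) + c).
Proof.
rewrite /cball /= => x_in_ball /andP[t0 t1]; rewrite addrK normrZ ger0_norm //.
have := normr_ge0 (x - c); nra.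
Qed.

Lemma diff_bounded_cball_sqr (R : realType) (X Y : normedModType R)
    (ipY : Y -> Y -> R) (G : X -> Y) (c : X) (rho L : R) :
  is_inner_product ipY ->
  (forall z, cball c rho z -> differentiable G z) ->
  (forall z, cball c rho z -> forall h, `|'d G z h| <= L * `|h|) ->
  forall x, cball c rho x -> `|G x - G c| ^+ 2 <= L ^+ 2 * `|x - c| ^+ 2.
Proof.
move=> ipY_inner dG dG_bound x x_in_ball.
set e := x - c; set w := G x - G c.
have ip_linearl : linear (ipY^~ w) by move=> a u v; rewrite ip_linear.
pose l : {linear Y -> R} := HB.pack (ipY^~ w) (GRing.isLinear.Build _ _ _ _ _ ip_linearl).
have l_cont : continuous l by exact: ip_continuousl.
pose g : R -> X := fun t => t *: e + c.
have g_ball (t : R) : 0 <= t <= 1 -> cball c rho (g t) := cball_segment x_in_ball.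
have gE : g = (fun t : R => t *: e) + cst c by apply/funext.
have dg1 (t : R) : 'd g t 1 = e.
  rewrite gE diffD; [|exact: differentiableZl|exact: differentiable_cst].
  by rewrite diffZl //= diff_cst /= addr0 -deriveE // derive_id scale1r.
(* The mean value theorem for t |-> <G (c + t e), G x - G c> *)
pose phi := l \o (G \o g).
have dGg (t : R) : 0 <= t <= 1 -> differentiable (G \o g) t.
  move=> tb; apply: differentiable_comp; last exact/dG/g_ball.
  by rewrite gE; apply: differentiableD; [apply: differentiableZl | apply: differentiable_cst].
have dphi (t : R) : 0 <= t <= 1 -> differentiable phi t.
  by move=> tb; apply: differentiable_comp; [exact: dGg | exact: linear_differentiable].
have Dphi (t : R) : 0 <= t <= 1 -> 'D_1 phi t = ipY ('d G (g t) e) w.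
  move=> tb; rewrite deriveE; last exact: dphi.
  rewrite diff_comp; [|exact: dGg|exact: linear_differentiable].
  by rewrite /= (diff_lin _ l_cont) /= diff_comp //= ?dg1 //; apply/dG/g_ball.
have [t0 t0b phiE] : exists2 t0, t0 \in `[0, 1]%R & phi 1 - phi 0 = 'D_1 phi t0 * (1 - 0).
  apply: MVT_segment => //.
    move=> t; rewrite in_itv /= => /andP[ta tb]; apply: derivableP.
    by apply/diff_derivable/dphi; rewrite !ltW.
  apply: derivable_within_continuous => t; rewrite in_itv /= => tb.
  exact/diff_derivable/dphi.
move: t0b phiE; rewrite in_itv /= => t0b.
rewrite subr0 mulr1 Dphi // /phi /= /g scale1r scale0r add0r subrK.
rewrite -(ipBl ipY_inner) (ipnormE ipY_inner) => w_sqr.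
have : `|w| ^+ 2 <= L * `|e| * `|w|.
  rewrite w_sqr; apply: le_trans (ip_le_norm ipY_inner _ _) _.
  by rewrite ler_wpM2r //; apply/dG_bound/g_ball.
have := normr_ge0 w; nra.
Qed.

Lemma tcc_ip_ge (R : realType) (V : normedModType R) (ip : V -> V -> R)
    (p q y w : V) (eta : R) :
  is_inner_product ip -> 0 <= eta -> `|q - p + w| <= eta * `|q - p| ->
  (1 - eta) * `|p - y| ^+ 2 - (1 + eta) * `|y - q| * `|p - y| <= ip w (p - y).
Proof.
move=> ip_inner eta0 tcc.
set r := p - y; set nu := y - q; set z := q - p + w.
have -> : w = z + r + nu.
  by rewrite /z /r /nu -addrA subrKA addrC addrA subrKA subrr add0r.
have z_le : `|z| <= eta * (`|r| + `|nu|).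
  apply: le_trans tcc _; rewrite ler_wpM2l // -normrN opprB.
  by rewrite -(subrKA y) ler_normD.
clearbody r nu z; rewrite !(ipDl ip_inner) (ipnormE ip_inner).
have := ip_ge_norm ip_inner z r; have := ip_ge_norm ip_inner nu r.
have := normr_ge0 r; have := normr_ge0 nu; nra.
Qed.

Definition growth_coef (R : realType) (et la LG : R) : R :=
  2 * et * la * Num.max 1 (LG ^+ 2) * (3 / 2 + 2 * et * la * LG ^+ 2).

(* [E], [Rr], [S]: norms of the error e and of the F- and G-residuals r and s;
   [N]: the noise; [a]: the bound |G(x^dagger) - y^dagger| + N on |G(x^dagger) - y|;
   [IF], [IG]: the inner products <F'(x) e, r> and <G'(x) e, s>; [Q]: the squared
   norm of the search direction F'(x)^* r + la G'(x)^* s. *)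
Lemma step_sqr_arith (R : realType) (E Rr N a S IF IG Q et la LF LG etaF : R) :
  0 < et -> 0 < la ->
  Q <= 2 * LF ^+ 2 * Rr ^+ 2 + 2 * la ^+ 2 * LG ^+ 2 * S ^+ 2 ->
  (1 - etaF) * Rr ^+ 2 - (1 + etaF) * N * Rr <= IF ->
  - (2 * IG) <= LG ^+ 2 * E ^+ 2 + S ^+ 2 ->
  S ^+ 2 <= 2 * LG ^+ 2 * E ^+ 2 + 2 * a ^+ 2 ->
  E ^+ 2 - 2 * (et * (IF + la * IG)) + et ^+ 2 * Q <=
  (1 + growth_coef et la LG) * E ^+ 2 + growth_coef et la LG * a ^+ 2
  - 2 * (1 - LF ^+ 2 * et - etaF) * et * Rr ^+ 2 + 2 * (1 + etaF) * et * (N * Rr).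
Proof.
move=> et0 la0 Q_le IF_ge IG_ge S_le.
have etla0 : 0 <= et * la by rewrite mulr_ge0 ?ltW.
have etlaLG0 : 0 <= et * la * LG ^+ 2 by rewrite mulr_ge0 ?sqr_ge0.
pose M := Num.max 1 (LG ^+ 2).
have growthE : growth_coef et la LG = et * la * M * (3 + 4 * (et * la * LG ^+ 2)).
  by rewrite /growth_coef -/M; field.
have hF := ler_wpM2l (ltW et0) IF_ge.
have hG := ler_wpM2l etla0 IG_ge.
have hQ := ler_wpM2l (sqr_ge0 et) Q_le.
have hS := ler_wpM2l (addr_ge0 etla0 (mulr_ge0 (mulr_ge0 (ler0n _ 2) etla0) etlaLG0)) S_le.
have hM (M' : R) : M' <= M -> et * la * M' * (3 + 4 * (et * la * LG ^+ 2)) <= growth_coef et la LG.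
  move=> M'M; rewrite growthE ler_wpM2r ?ler_wpM2l //; lra.
have M_ge1 : 1 <= M by rewrite le_max lexx.
have M_geLG : LG ^+ 2 <= M by rewrite le_max lexx orbT.
have hE := ler_wpM2r (sqr_ge0 E) (hM _ M_geLG).
have ha := ler_wpM2r (sqr_ge0 a) (hM _ M_ge1).
nra.
Qed.

Lemma step_error_sqr_le (R : realType) (X Y : normedModType R)
    (ipX : X -> X -> R) (ipY : Y -> Y -> R) (Fi Gi : X -> Y) (Fsi Gsi : X -> Y -> X)
    (x xdag : X) (y yg : Y) (LF LG etaF et la : R) :
  is_inner_product ipX -> is_inner_product ipY ->
  (forall h, `|'d Fi x h| <= LF * `|h|) -> (forall h, `|'d Gi x h| <= LG * `|h|) ->
  (forall h v, ipY ('d Fi x h) v = ipX h (Fsi x v)) ->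
  (forall h v, ipY ('d Gi x h) v = ipX h (Gsi x v)) ->
  `|Fi xdag - Fi x - 'd Fi x (xdag - x)| <= etaF * `|Fi xdag - Fi x| ->
  `|Gi x - Gi xdag| ^+ 2 <= LG ^+ 2 * `|x - xdag| ^+ 2 ->
  Fi xdag = yg -> 0 <= etaF -> 0 < et -> 0 < la ->
  `|x - et *: (Fsi x (Fi x - y) + la *: Gsi x (Gi x - y)) - xdag| ^+ 2
  <= (1 + growth_coef et la LG) * `|x - xdag| ^+ 2
     + growth_coef et la LG * (`|Gi xdag - yg| + `|y - yg|) ^+ 2
     - 2 * (1 - LF ^+ 2 * et - etaF) * et * `|Fi x - y| ^+ 2
     + 2 * (1 + etaF) * et * (`|y - yg| * `|Fi x - y|).
Proof.
move=> ipX_inner ipY_inner dF_bound dG_bound adjF adjG tcc G_lip Fxdag etaF0 et0 la0.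
set r := Fi x - y; set s := Gi x - y; set e := x - xdag.
have -> : x - et *: (Fsi x r + la *: Gsi x s) - xdag = e - et *: (Fsi x r + la *: Gsi x s).
  by rewrite addrAC.
rewrite (normB_sqr ipX_inner) (ipZr ipX_inner) (ipDr ipX_inner) (ipZr ipX_inner) -adjF -adjG.
rewrite normrZ exprMn gtr0_norm //.
apply: (step_sqr_arith (S := `|s|)) => //.
- apply: le_trans (normD_sqr_le ipX_inner _ _) _.
  rewrite normrZ exprMn gtr0_norm //.
  have := adjoint_norm_sqr_le ipX_inner ipY_inner dF_bound adjF r.
  have := ler_wpM2l (sqr_ge0 la) (adjoint_norm_sqr_le ipX_inner ipY_inner dG_bound adjG s).
  lra.
- rewrite -Fxdag; apply: (tcc_ip_ge _ ipY_inner etaF0).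
  by rewrite -[xdag - x]opprB linearN opprK in tcc.
- apply: le_trans (oppr_ip2_le ipY_inner _ _) _; rewrite lerD2r.
  have := dG_bound e; have := normr_ge0 ('d Gi x e); have := normr_ge0 e; nra.
- have -> : s = (Gi x - Gi xdag) + ((Gi xdag - yg) - (y - yg)).
    by rewrite /s opprB !subrKA.
  apply: le_trans (normD_sqr_le ipY_inner _ _) _.
  have : `|(Gi xdag - yg) - (y - yg)| <= `|Gi xdag - yg| + `|y - yg| := ler_normB _ _.
  have := normr_ge0 ((Gi xdag - yg) - (y - yg)); nra.
Qed.

Definition noise_coef (R : realType) (etaF LF et : R) : R :=
  (1 + etaF) ^+ 2 / (2 * (1 - LF ^+ 2 * et - etaF)) * et.

Lemma noise_coef_ge (R : realType) (etaF LF et N r : R) :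
  0 < et -> 0 < 1 - LF ^+ 2 * et - etaF ->
  2 * (1 + etaF) * et * (N * r) - 2 * (1 - LF ^+ 2 * et - etaF) * et * r ^+ 2
  <= noise_coef etaF LF et * N ^+ 2.
Proof.
move=> et0 gap0; set A := 2 * (1 - LF ^+ 2 * et - etaF) * et; set B := 2 * (1 + etaF) * et.
have A0 : 0 < A by rewrite /A !mulr_gt0.
have -> : noise_coef etaF LF et = B ^+ 2 / (4 * A).
  by rewrite /noise_coef /A /B; field; rewrite !lt0r_neq0.
have : 0 <= (B * N - 2 * A * r) ^+ 2 / (4 * A) by rewrite divr_ge0 ?sqr_ge0 ?mulr_ge0 ?ltW.
have -> : (B * N - 2 * A * r) ^+ 2 / (4 * A) =
    B ^+ 2 / (4 * A) * N ^+ 2 - (B * (N * r) - A * r ^+ 2).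
  by field; rewrite lt0r_neq0.
lra.
Qed.

Section Iteration.
Variables (R : realType) (X Y : normedModType R) (ipX : X -> X -> R) (ipY : Y -> Y -> R).
Variables (n : nat) (F G : 'I_n -> X -> Y) (Fs Gs : 'I_n -> X -> Y -> X).
Variables (ydag yd : 'I_n -> Y) (delta : R) (x1 xdag : X).
Variables (rho LF LG etaF Cmax : R) (eta lam : nat -> R) (m : nat).
Hypotheses (ipX_inner : is_inner_product ipX) (ipY_inner : is_inner_product ipY).
Hypothesis n_gt0 : (0 < n)%N.
Hypothesis noise_le : pnorm (fun i => yd i - ydag i) <= delta.
Hypothesis F_xdag : forall i, F i xdag = ydag i.
Hypothesis G_xdag_le : pnorm (fun i => G i xdag - ydag i) <= Cmax.
Hypothesis xdag_in_ball : cball xdag rho xdag.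
Hypothesis G_diff : forall i x, cball xdag rho x -> differentiable (G i) x.
Hypothesis dF_bound : forall i x, cball xdag rho x -> forall h, `|'d (F i) x h| <= LF * `|h|.
Hypothesis dG_bound : forall i x, cball xdag rho x -> forall h, `|'d (G i) x h| <= LG * `|h|.
Hypothesis adjF : forall i x, cball xdag rho x -> forall h v,
  ipY ('d (F i) x h) v = ipX h (Fs i x v).
Hypothesis adjG : forall i x, cball xdag rho x -> forall h v,
  ipY ('d (G i) x h) v = ipX h (Gs i x v).
Hypothesis etaF_ge0 : 0 <= etaF.
Hypothesis tcc : forall i x xt, cball xdag rho x -> cball xdag rho xt ->
  `|F i x - F i xt - 'd (F i) xt (x - xt)| <= etaF * `|F i x - F i xt|.
Hypotheses (eta_gt0 : 0 < eta m.+1) (lam_gt0 : 0 < lam m.+1).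
Hypothesis step_gap : 0 < 1 - LF ^+ 2 * eta m.+1 - etaF.
Hypothesis iterate_in_ball : forall t : m.-tuple 'I_n,
  cball xdag rho (run F G Fs Gs yd eta lam 1 x1 t).

Local Notation xk := (run F G Fs Gs yd eta lam 1 x1).
Local Notation ck := (growth_coef (eta m.+1) (lam m.+1) LG).
Local Notation dk := (noise_coef etaF LF (eta m.+1)).
Local Notation A := (2 * (1 - LF ^+ 2 * eta m.+1 - etaF) * eta m.+1).
Local Notation B := (2 * (1 + etaF) * eta m.+1).
Local Notation noise i := `|yd i - ydag i|.
Local Notation bias i := (`|G i xdag - ydag i| + `|yd i - ydag i|).
Local Notation resid t := (pnorm (fun i => F i (xk t) - yd i)).

Lemma growth_coef_ge0 : 0 <= ck.
Proof.
have etla0 : 0 <= eta m.+1 * lam m.+1 by rewrite mulr_ge0 ?ltW.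
have M0 : 0 <= Num.max 1 (LG ^+ 2) by rewrite le_max ler01.
have := mulr_ge0 etla0 M0; have := mulr_ge0 etla0 (sqr_ge0 LG).
rewrite /growth_coef; nra.
Qed.

Lemma cross_coef_ge0 : 0 <= B.
Proof. by apply: mulr_ge0 (ltW eta_gt0); rewrite mulr_ge0 ?addr_ge0. Qed.

Lemma mean_sqr_bias_le : favg (fun i => bias i ^+ 2) <= (Cmax + delta) ^+ 2.
Proof.
apply: le_trans (favg_sqrD_le _ _) _; rewrite -!pnormE.
have pG0 := pnorm_ge0 (fun i => G i xdag - ydag i).
have pnoise0 := pnorm_ge0 (fun i => yd i - ydag i).
have Cmax0 := le_trans pG0 G_xdag_le; have delta0 := le_trans pnoise0 noise_le.
by rewrite ler_sqr ?nnegrE ?addr_ge0 // lerD.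
Qed.

Lemma mean_sqr_noise_le : favg (fun i => noise i ^+ 2) <= delta ^+ 2.
Proof.
have mean_ge0 : 0 <= favg (fun i => noise i ^+ 2) by apply: favg_ge0 => i; exact: sqr_ge0.
have pnoise0 := pnorm_ge0 (fun i => yd i - ydag i).
have delta0 := le_trans pnoise0 noise_le.
by rewrite -(sqr_sqrtr mean_ge0) -pnormE ler_sqr ?nnegrE.
Qed.

Lemma iterate_step_le (t : m.-tuple 'I_n) (i : 'I_n) :
  `|xk (rcons t i) - xdag| ^+ 2 <=
  (1 + ck) * `|xk t - xdag| ^+ 2 + ck * bias i ^+ 2
  - A * `|F i (xk t) - yd i| ^+ 2 + B * (noise i * `|F i (xk t) - yd i|).
Proof.
have xt_ball := iterate_in_ball t.
rewrite run_rcons size_tuple add1n /step.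
apply: step_error_sqr_le => //.
- exact: ipX_inner.
- exact: ipY_inner.
- exact: dF_bound xt_ball.
- exact: dG_bound xt_ball.
- exact: adjF xt_ball.
- exact: adjG xt_ball.
- exact: tcc xdag_in_ball xt_ball.
- exact: diff_bounded_cball_sqr ipY_inner (G_diff i) (dG_bound i) _ xt_ball.
Qed.

Lemma iterate_step_pathwise_le (t : m.-tuple 'I_n) (i : 'I_n) :
  `|xk (rcons t i) - xdag| ^+ 2 <=
  (1 + n%:R * ck) * `|xk t - xdag| ^+ 2 + n%:R * ck * (Cmax + delta) ^+ 2
  + n%:R * dk * delta ^+ 2.
Proof.
apply: le_trans (iterate_step_le t i) _.
have noise_sqr : noise i ^+ 2 <= n%:R * delta ^+ 2.
  have := le_card_favg (f := fun j => noise j ^+ 2) i (fun j => sqr_ge0 _).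
  by rewrite card_ord => /le_trans; apply; rewrite ler_wpM2l ?mean_sqr_noise_le.
have bias_sqr : bias i ^+ 2 <= n%:R * (Cmax + delta) ^+ 2.
  have := le_card_favg (f := fun j => bias j ^+ 2) i (fun j => sqr_ge0 _).
  by rewrite card_ord => /le_trans; apply; rewrite ler_wpM2l ?mean_sqr_bias_le.
have n_ge1 : 1 <= n%:R :> R by rewrite ler1n.
have ck0 := growth_coef_ge0.
have dk0 : 0 <= dk.
  apply: mulr_ge0 (ltW eta_gt0); apply: divr_ge0; first exact: sqr_ge0.
  by apply: mulr_ge0 (ltW step_gap).
have := noise_coef_ge (noise i) `|F i (xk t) - yd i| eta_gt0 step_gap.
have := ler_wpM2l ck0 bias_sqr; have := ler_wpM2l dk0 noise_sqr.
have := mulr_ge0 ck0 (sqr_ge0 `|xk t - xdag|).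
nra.
Qed.

Lemma iterate_mean_step_le (t : m.-tuple 'I_n) :
  favg (fun i => `|xk (rcons t i) - xdag| ^+ 2) <=
  (1 + ck) * `|xk t - xdag| ^+ 2 + ck * (Cmax + delta) ^+ 2
  + B * (delta * resid t) - A * resid t ^+ 2.
Proof.
apply: le_trans (favg_le (iterate_step_le t)) _.
rewrite favgD favgB favgD favg_cst ?card_ord // !favgZ.
have resid_sqr : favg (fun i => `|F i (xk t) - yd i| ^+ 2) = resid t ^+ 2.
  by rewrite pnormE sqr_sqrtr // favg_ge0 // => i; exact: sqr_ge0.
have cross : favg (fun i => noise i * `|F i (xk t) - yd i|) <= delta * resid t.
  apply: le_trans (favg_mul_le _ _) _; rewrite -!pnormE.
  by rewrite ler_wpM2r ?pnorm_ge0.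
have := ler_wpM2l growth_coef_ge0 mean_sqr_bias_le.
have := ler_wpM2l cross_coef_ge0 cross.
rewrite resid_sqr; lra.
Qed.

Lemma iterate_expect_le :
  Eunif (fun t : m.+1.-tuple 'I_n => `|xk t - xdag| ^+ 2) <=
  (1 + ck) * Eunif (fun t : m.-tuple 'I_n => `|xk t - xdag| ^+ 2)
  + ck * (Cmax + delta) ^+ 2
  + B * delta * Num.sqrt (Eunif (fun t : m.-tuple 'I_n => resid t ^+ 2))
  - A * Eunif (fun t : m.-tuple 'I_n => resid t ^+ 2).
Proof.
rewrite !EunifE (favg_tuple_rcons m (fun s => `|xk s - xdag| ^+ 2)).
apply: le_trans (favg_le iterate_mean_step_le) _.
have T0 : (0 < #|{: m.-tuple 'I_n}|)%N by rewrite card_tuple card_ord expn_gt0 n_gt0.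
rewrite favgB favgD favgD favg_cst // !favgZ.
have delta0 : 0 <= delta := le_trans (pnorm_ge0 _) noise_le.
have := ler_wpM2l (mulr_ge0 cross_coef_ge0 delta0)
  (favg_le_sqrt (fun t : m.-tuple 'I_n => resid t) T0).
lra.
Qed.

End Iteration.

Unset Implicit Arguments.

Theorem proposition3p1
  (R : realType) (X Y : completeNormedModType R)
  (ipX : X -> X -> R) (ipY : Y -> Y -> R)
  (n : nat)
  (D : 'I_n -> set X) (F G : 'I_n -> X -> Y) (Fs Gs : 'I_n -> X -> Y -> X)
  (ydag yd : 'I_n -> Y) (delta : R)
  (x1 xdag : X) (rho : R)
  (LF LG etaF Cmin Cmax : R) (eta lam : nat -> R) (m : nat) :
  is_inner_product ipX -> is_inner_product ipY ->
  (0 < n)%N ->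
  (* noise level ||y^delta - y^dagger|| <= delta *)
  pnorm (fun i => yd i - ydag i) <= delta ->
  (* x^dagger: solution of F(x) = y^dagger of minimal distance to x_1 *)
  (forall i, D i xdag) -> (forall i, F i xdag = ydag i) ->
  (forall x, (forall i, D i x) -> (forall i, F i x = ydag i) ->
     `|xdag - x1| <= `|x - x1|) ->
  (* (A): the ball and the assumptions on it *)
  `|x1 - xdag| <= rho ->
  (forall i, cball xdag rho `<=` D i) ->
  (* (A)(i) *)
  (forall i, C1_on (F i) (cball xdag rho)) ->
  (forall i, C1_on (G i) (cball xdag rho)) ->
  (forall i x, cball xdag rho x -> forall h, `|'d (F i) x h| <= LF * `|h|) ->
  (forall i x, cball xdag rho x -> forall h, `|'d (G i) x h| <= LG * `|h|) ->
  (* Fs, Gs are the adjoints of the derivatives on the ball *)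
  (forall i x, cball xdag rho x -> forall h v,
     ipY ('d (F i) x h) v = ipX h (Fs i x v)) ->
  (forall i x, cball xdag rho x -> forall h v,
     ipY ('d (G i) x h) v = ipX h (Gs i x v)) ->
  (* (A)(ii) tangential cone condition *)
  0 <= etaF -> etaF < 1 ->
  (forall i x xt, cball xdag rho x -> cball xdag rho xt ->
     `|F i x - F i xt - 'd (F i) xt (x - xt)| <= etaF * `|F i x - F i xt|) ->
  (* (A)(iii) *)
  0 < Cmin -> Cmin <= Cmax ->
  (forall xs, cball xdag rho xs -> (forall i, F i xs = ydag i) ->
     Cmin <= pnorm (fun i => G i xs - ydag i) <= Cmax) ->
  (* (P), and L_F^2 eta_k < 1 - eta_F, for k >= 1 *)
  (forall k, (1 <= k)%N -> 0 < eta k /\ 0 < lam k) ->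
  (forall k, (1 <= k)%N -> LF ^+ 2 * eta k < 1) ->
  (fun N => \sum_(1 <= k < N) eta k) @ \oo --> +oo ->
  cvg ((fun N => \sum_(1 <= k < N) (eta k * lam k)) @ \oo) ->
  (forall k, (1 <= k)%N -> LF ^+ 2 * eta k < 1 - etaF) ->
  (* k = m+1 >= 1, and x_k lies in the ball (for every realization) *)
  (forall t : m.-tuple 'I_n, cball xdag rho (run F G Fs Gs yd eta lam 1 x1 t)) ->
  let k := m.+1 in
  let xk (t : seq 'I_n) := run F G Fs Gs yd eta lam 1 x1 t in
  let ck := 2 * eta k * lam k * Num.max 1 (LG ^+ 2)
            * (3 / 2 + 2 * eta k * lam k * LG ^+ 2) in
  let dk := (1 + etaF) ^+ 2 / (2 * (1 - LF ^+ 2 * eta k - etaF)) * eta k in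
  let Eek := Eunif (fun t : m.-tuple 'I_n => `|xk t - xdag| ^+ 2) in
  let Eek1 := Eunif (fun t : m.+1.-tuple 'I_n => `|xk t - xdag| ^+ 2) in
  let Eres := Eunif (fun t : m.-tuple 'I_n =>
                 pnorm (fun i => F i (xk t) - yd i) ^+ 2) in
  (forall (t : m.-tuple 'I_n) (i : 'I_n),
     `|xk (rcons t i) - xdag| ^+ 2
       <= (1 + n%:R * ck) * `|xk t - xdag| ^+ 2
          + n%:R * ck * (Cmax + delta) ^+ 2 + n%:R * dk * delta ^+ 2)
  /\
  Eek1 <= (1 + ck) * Eek + ck * (Cmax + delta) ^+ 2
          + 2 * (1 + etaF) * eta k * delta * Num.sqrt Eres
          - 2 * (1 - LF ^+ 2 * eta k - etaF) * eta k * Eres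
  /\
  (1 + ck) * Eek + ck * (Cmax + delta) ^+ 2
          + 2 * (1 + etaF) * eta k * delta * Num.sqrt Eres
          - 2 * (1 - LF ^+ 2 * eta k - etaF) * eta k * Eres
    <= (1 + ck) * Eek + ck * (Cmax + delta) ^+ 2 + dk * delta ^+ 2.
Proof.
move=> ipX_inner ipY_inner n_gt0 noise_le _ F_xdag _ x1_in_ball _ _ C1G dF_bound dG_bound
  adjF adjG etaF_ge0 _ tcc _ _ G_bounds eta_lam_gt0 _ _ _ step_small iterate_in_ball
  k xk ck dk Eek Eek1 Eres.
have [eta_gt0 lam_gt0] := eta_lam_gt0 k isT.
have step_gap : 0 < 1 - LF ^+ 2 * eta k - etaF by have := step_small k isT; lra.
have xdag_in_ball : cball xdag rho xdag.
  by rewrite /cball /= subrr normr0 (le_trans (normr_ge0 _) x1_in_ball).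
have /andP[_ G_xdag_le] := G_bounds xdag xdag_in_ball F_xdag.
have G_diff i x (x_in_ball : cball xdag rho x) : differentiable (G i) x := (C1G i).1 x x_in_ball.
split; [|split].
- by apply: (iterate_step_pathwise_le (ydag := ydag) (rho := rho) ipX_inner ipY_inner).
- by apply: (iterate_expect_le (ydag := ydag) (rho := rho) ipX_inner ipY_inner).
- have Eres0 : 0 <= Eres by rewrite /Eres EunifE; apply: favg_ge0 => t; exact: sqr_ge0.
  have := noise_coef_ge delta (Num.sqrt Eres) eta_gt0 step_gap.
  rewrite sqr_sqrtr // /noise_coef -/dk; lra.
Qed.
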